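(* Let $X$ be a complex Banach space with open unit ball $B$, let $H(B)$ be a uniform algebra with $A_u(B)\subseteq H(B)\subseteq H^\infty(B)$, let $x_0^{**}\in\bar B^{**}$ and $f\in H(B)$. If $\hat f$ is constant on the fiber $M_{x_0^{**}}$, then $f$ extends to a norm-continuous function $f_0$ on $B\cup\{x_0^{**}\}$ which is $w(X^{**},X^* )$-continuous at $x_0^{**}$ (i.e. $f(x_\alpha)\to f_0(x_0^{**})$ for every net $(x_\alpha)\subset B$ weak-star converging to $x_0^{**}$).
   Context: $H^\infty(B)$: bounded holomorphic functions on $B$ with sup norm; $A_u(B)$: uniformly continuous holomorphic functions on $B$; a uniform algebra between them is a closed unital subalgebra of $H^\infty(B)$ containing $A_u(B)$. $M_{H(B)}$ is its spectrum (weak-star topology), $\hat f$ the Gelfand transform. $\bar B^{**}$ is the closed unit ball of $X^{**}$. The (original) fiber over $x^{**}\in\bar B^{**}$ is $M_{x^{**}}=\pi^{-1}(x^{**})$, where $\pi:M_{H(B)}\to\bar B^{**}$, $\pi(\tau)=\tau|_{X^*}$ (identifying a point of $\bar B^{**}$ with the character $L\mapsto x^{**}(L)$ on $X^*$), i.e. $M_{x^{**}}=\{\tau\in M_{H(B)}:\tau(L)=x^{**}(L)\ \forall L\in X^*\}$. *)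

From Stdlib Require Import Reals List.
Open Scope R_scope.

Record Cx := mkC { re : R; im : R }.
Definition C0 : Cx := mkC 0 0.
Definition C1 : Cx := mkC 1 0.
Definition Cadd (z w : Cx) : Cx := mkC (re z + re w) (im z + im w).
Definition Copp (z : Cx) : Cx := mkC (- re z) (- im z).
Definition Csub (z w : Cx) : Cx := Cadd z (Copp w).
Definition Cmul (z w : Cx) : Cx :=
  mkC (re z * re w - im z * im w) (re z * im w + im z * re w).
Definition Cabs (z : Cx) : R := sqrt (re z * re z + im z * im z).

Record CBanach := {
  bcar :> Type;
  bzero : bcar;
  badd : bcar -> bcar -> bcar;
  bopp : bcar -> bcar;
  bscal : Cx -> bcar -> bcar;
  bnorm : bcar -> R;
  badd_assoc : forall x y z, badd x (badd y z) = badd (badd x y) z;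
  badd_comm : forall x y, badd x y = badd y x;
  badd_0 : forall x, badd x bzero = x;
  badd_opp : forall x, badd x (bopp x) = bzero;
  bscal_1 : forall x, bscal C1 x = x;
  bscal_assoc : forall a b x, bscal a (bscal b x) = bscal (Cmul a b) x;
  bscal_addv : forall a x y, bscal a (badd x y) = badd (bscal a x) (bscal a y);
  bscal_addc : forall a b x, bscal (Cadd a b) x = badd (bscal a x) (bscal b x);
  bnorm_eq0 : forall x, bnorm x = 0 -> x = bzero;
  bnorm_scal : forall a x, bnorm (bscal a x) = Cabs a * bnorm x;
  bnorm_triangle : forall x y, bnorm (badd x y) <= bnorm x + bnorm y;
  bcomplete : forall u : nat -> bcar,
    (forall eps, 0 < eps -> exists N, forall n m, (N <= n)%nat -> (N <= m)%nat ->
       bnorm (badd (u n) (bopp (u m))) < eps) ->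
    exists l, forall eps, 0 < eps -> exists N, forall n, (N <= n)%nat ->
       bnorm (badd (u n) (bopp l)) < eps
}.

Section Banach.
Variable X : CBanach.

Definition bsub (x y : X) : X := badd X x (bopp X y).

Definition bounded_by (L : X -> Cx) (M : R) : Prop :=
  forall x, Cabs (L x) <= M * bnorm X x.

Definition in_dual (L : X -> Cx) : Prop :=
  (forall x y, L (badd X x y) = Cadd (L x) (L y)) /\
  (forall a x, L (bscal X a x) = Cmul a (L x)) /\
  (exists M, bounded_by L M).

(** Elements of Xbidual are represented as functions on (X -> Cx); only their
    values on Xdual matter. *)
Definition bidual := (X -> Cx) -> Cx.

Definition bidual_linear (phi : bidual) : Prop :=
  (forall L1 L2, in_dual L1 -> in_dual L2 ->
     phi (fun x => Cadd (L1 x) (L2 x)) = Cadd (phi L1) (phi L2)) /\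
  (forall a L, in_dual L -> phi (fun x => Cmul a (L x)) = Cmul a (phi L)).

(** ||phi - psi||_{Xbidual} <= d, i.e. |phi L - psi L| <= d ||L|| for L in Xdual *)
Definition bidual_dist_le (phi psi : bidual) (d : R) : Prop :=
  forall L M, in_dual L -> 0 <= M -> bounded_by L M ->
    Cabs (Csub (phi L) (psi L)) <= d * M.

Definition bidual_dist_lt (phi psi : bidual) (r : R) : Prop :=
  exists d, d < r /\ bidual_dist_le phi psi d.

Definition in_bidual_ball (phi : bidual) : Prop :=
  bidual_linear phi /\ bidual_dist_le phi (fun _ => C0) 1.

Definition Jcan (x : X) : bidual := fun L => L x.

Definition Ball := { x : X | bnorm X x < 1 }.

Definition holomorphic (f : Ball -> Cx) : Prop :=
  forall x : Ball, exists L, in_dual L /\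
    forall eps, 0 < eps -> exists delta, 0 < delta /\
      forall y : Ball, bnorm X (bsub (proj1_sig y) (proj1_sig x)) < delta ->
        Cabs (Csub (Csub (f y) (f x)) (L (bsub (proj1_sig y) (proj1_sig x))))
          <= eps * bnorm X (bsub (proj1_sig y) (proj1_sig x)).

Definition unif_continuous (f : Ball -> Cx) : Prop :=
  forall eps, 0 < eps -> exists delta, 0 < delta /\
    forall x y : Ball, bnorm X (bsub (proj1_sig x) (proj1_sig y)) < delta ->
      Cabs (Csub (f x) (f y)) < eps.

Definition fbounded (f : Ball -> Cx) : Prop :=
  exists M, forall x, Cabs (f x) <= M.

Definition in_Hinf (f : Ball -> Cx) : Prop := holomorphic f /\ fbounded f.
Definition in_Au (f : Ball -> Cx) : Prop := holomorphic f /\ unif_continuous f.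

Definition uniform_algebra_between (H : (Ball -> Cx) -> Prop) : Prop :=
  (forall f, in_Au f -> H f) /\
  (forall f, H f -> in_Hinf f) /\
  (forall f g, H f -> H g -> H (fun x => Cadd (f x) (g x))) /\
  (forall a f, H f -> H (fun x => Cmul a (f x))) /\
  (forall f g, H f -> H g -> H (fun x => Cmul (f x) (g x))) /\
  (forall (u : nat -> Ball -> Cx) g, (forall n, H (u n)) ->
     (forall eps, 0 < eps -> exists N, forall n, (N <= n)%nat ->
        forall x, Cabs (Csub (u n x) (g x)) <= eps) -> H g).

Definition in_spectrum (H : (Ball -> Cx) -> Prop) (tau : (Ball -> Cx) -> Cx) : Prop :=
  (forall f g, H f -> H g -> tau (fun x => Cadd (f x) (g x)) = Cadd (tau f) (tau g)) /\
  (forall a f, H f -> tau (fun x => Cmul a (f x)) = Cmul a (tau f)) /\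
  (forall f g, H f -> H g -> tau (fun x => Cmul (f x) (g x)) = Cmul (tau f) (tau g)) /\
  (exists f, H f /\ tau f <> C0).

Definition in_fiber (H : (Ball -> Cx) -> Prop) (x0 : bidual) (tau : (Ball -> Cx) -> Cx) : Prop :=
  in_spectrum H tau /\
  forall L, in_dual L -> tau (fun x : Ball => L (proj1_sig x)) = x0 L.

(** Points of B u {x0}: [Some x] is J(x), [None] is x0 *)
Definition emb (x0 : bidual) (p : option Ball) : bidual :=
  match p with Some x => Jcan (proj1_sig x) | None => x0 end.

Definition norm_continuous_on (x0 : bidual) (f0 : option Ball -> Cx) : Prop :=
  forall p eps, 0 < eps -> exists delta, 0 < delta /\
    forall q, bidual_dist_lt (emb x0 q) (emb x0 p) delta ->
      Cabs (Csub (f0 q) (f0 p)) < eps.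

(** w(Xbidual,Xdual  )-continuity of f0 at x0 (relative to B u {x0}),
    via the basic weak-star neighbourhoods of x0 *)
Definition weakstar_continuous_at_x0 (x0 : bidual) (f0 : option Ball -> Cx) : Prop :=
  forall eps, 0 < eps -> exists (Ls : list (X -> Cx)) delta,
    Forall in_dual Ls /\ 0 < delta /\
    forall q, (forall L, In L Ls -> Cabs (Csub (emb x0 q L) (x0 L)) < delta) ->
      Cabs (Csub (f0 q) (f0 None)) < eps.

End Banach.

Arguments Ball : clear implicits.

(* Let c be the common value of the fiber characters on f and extend f by f0(x0) := c.
   If f0 were not weak-star continuous at x0, the points y of B that are weak-star close
   to x0 with |f y - c| >= eps would form a filter base; the limit along an ultrafilter
   refining it is a character of H(B) lying in the fiber over x0, yet its value on f is at
   distance >= eps from c.  Norm continuity at x0 follows because the bidual norm dominates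
   each weak-star seminorm.  At a point x of B either x0 = J x, and then evaluation at x
   lies in the fiber so that c = f x, or some functional separates x0 from J x and a small
   bidual ball around J x misses x0; in both cases continuity reduces to that of the
   holomorphic f, once Hahn-Banach gives ||y - x|| <= 2 ||J y - J x||. *)

From Stdlib Require Import Reals List Lra Psatz Classical ClassicalEpsilon.
From mathcomp Require all_boot boolp classical_sets filter.
Open Scope R_scope.

Lemma Cx_ext (z w : Cx) : re z = re w -> im z = im w -> z = w.
Proof. destruct z, w; simpl; intros; subst; reflexivity. Qed.

Ltac Cx_ring := apply Cx_ext; unfold Csub, Cadd, Copp, Cmul, C0, C1; simpl; ring.

Lemma Csub_same z : Csub z z = C0.
Proof. Cx_ring. Qed.

Lemma Csub_eq0 a b : Csub a b = C0 -> a = b.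
Proof.
  intro E. apply Cx_ext; [apply (f_equal re) in E | apply (f_equal im) in E];
  unfold Csub, Cadd, Copp, C0 in E; simpl in E; lra.
Qed.

Lemma Cabs_ge0 z : 0 <= Cabs z.
Proof. apply sqrt_pos. Qed.

Lemma Cabs_real r : Cabs (mkC r 0) = Rabs r.
Proof.
  unfold Cabs; simpl. rewrite <- sqrt_Rsqr_abs. f_equal; unfold Rsqr; ring.
Qed.

Lemma Cabs_C0 : Cabs C0 = 0.
Proof. unfold C0; rewrite Cabs_real; apply Rabs_R0. Qed.

Lemma Cabs_re z : Rabs (re z) <= Cabs z.
Proof. rewrite <- sqrt_Rsqr_abs; apply sqrt_le_1_alt; unfold Rsqr; nra. Qed.

Lemma Cabs_im z : Rabs (im z) <= Cabs z.
Proof. rewrite <- sqrt_Rsqr_abs; apply sqrt_le_1_alt; unfold Rsqr; nra. Qed.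

Lemma Cabs_le_re_im z : Cabs z <= Rabs (re z) + Rabs (im z).
Proof.
  pose proof (Rabs_pos (re z)); pose proof (Rabs_pos (im z)).
  rewrite <- (sqrt_square (Rabs (re z) + Rabs (im z))) by lra.
  apply sqrt_le_1_alt.
  pose proof (Rsqr_abs (re z)); pose proof (Rsqr_abs (im z)); unfold Rsqr in *.
  nra.
Qed.

Lemma Cabs_mul z w : Cabs (Cmul z w) = Cabs z * Cabs w.
Proof. unfold Cabs, Cmul; simpl. rewrite <- sqrt_mult by nra. f_equal; ring. Qed.

Lemma Cabs_sqr z : Cabs z * Cabs z = re z * re z + im z * im z.
Proof. apply sqrt_sqrt; nra. Qed.

Lemma Cabs_triangle z w : Cabs (Cadd z w) <= Cabs z + Cabs w.
Proof.
  (* Cauchy-Schwarz, read off from re (z * conj w) <= |z * conj w| *)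
  assert (Hcs : re z * re w + im z * im w <= Cabs z * Cabs w).
  { set (wbar := mkC (re w) (- im w)).
    assert (Hw : Cabs wbar = Cabs w) by (unfold Cabs, wbar; simpl; f_equal; ring).
    pose proof (Cabs_re (Cmul z wbar)) as h.
    rewrite Cabs_mul, Hw in h; unfold Cmul, wbar in h; simpl in h.
    pose proof (Rle_abs (re z * re w - im z * - im w)). lra. }
  pose proof (Cabs_ge0 z); pose proof (Cabs_ge0 w).
  pose proof (Cabs_sqr z); pose proof (Cabs_sqr w).
  rewrite <- (sqrt_square (Cabs z + Cabs w)) by lra.
  apply sqrt_le_1_alt; unfold Cadd; simpl. nra.
Qed.

Lemma Cabs_opp z : Cabs (Copp z) = Cabs z.
Proof. unfold Cabs, Copp; simpl; f_equal; ring. Qed.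

Lemma Cabs_eq0 z : Cabs z = 0 -> z = C0.
Proof.
  intro H. pose proof (Cabs_sqr z) as E. rewrite H in E.
  apply Cx_ext; simpl; nra.
Qed.

Lemma Cabs_pos z : z <> C0 -> 0 < Cabs z.
Proof.
  intro H. destruct (Cabs_ge0 z) as [h|h]; auto. exfalso; apply H, Cabs_eq0; auto.
Qed.

Lemma Cabs_sub_sym a b : Cabs (Csub a b) = Cabs (Csub b a).
Proof. rewrite <- Cabs_opp. f_equal. Cx_ring. Qed.

Lemma Cabs_sub_triangle a b c : Cabs (Csub a c) <= Cabs (Csub a b) + Cabs (Csub b c).
Proof.
  replace (Csub a c) with (Cadd (Csub a b) (Csub b c)) by Cx_ring.
  apply Cabs_triangle.
Qed.

Lemma Cabs_le_sub_add a b : Cabs a <= Cabs (Csub a b) + Cabs b.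
Proof.
  replace a with (Cadd (Csub a b) b) at 1 by Cx_ring.
  apply Cabs_triangle.
Qed.

Record ultrafilter (T : Type) := {
  umem :> (T -> Prop) -> Prop;
  umem_and : forall A C, umem A -> umem C -> umem (fun x => A x /\ C x);
  umem_mono : forall A C : T -> Prop, (forall x, A x -> C x) -> umem A -> umem C;
  umem_nonempty : forall A, umem A -> exists x, A x;
  umem_or_compl : forall A, umem A \/ umem (fun x => ~ A x) }.

Module ChoicePrinciples.
Import all_boot boolp classical_sets filter.

Lemma ultrafilter_of_basis (I T : Type) (B : I -> T -> Prop) :
  (exists i : I, True) ->
  (forall i j, exists k, forall x, B k x -> B i x /\ B j x) ->
  (forall i, exists x, B i x) ->
  exists U : ultrafilter T, forall i, U (B i).
Proof.
move=> [i0 _] Bdir Bne.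
have FF : Filter (filter_from setT B).
  apply: filter_fromT_filter; first by exists i0.
  move=> i j; have [k Hk] := Bdir i j; exists k => x /Hk [? ?]; by split.
have PF : ProperFilter (filter_from setT B).
  apply: filter_from_proper => i _; have [x Hx] := Bne i; by exists x.
have [G [UG sub]] := ultraFilterLemma PF.
unshelve eexists (@Build_ultrafilter T G _ _ _ _).
- move=> A C GA GC; apply: filterS (filterI GA GC) => x [? ?]; by split.
- move=> A C AsubC GA; exact: filterS AsubC GA.
- move=> A GA; have [x Ax] := filter_ex GA; by exists x.
- move=> A; exact: in_ultra_setVsetC A UG.
- move=> i; apply: sub; by exists i.
Qed.

Lemma zorn_preorder (T : Type) (t0 : T) (R : T -> T -> Prop) :
  (forall t, R t t) -> (forall r s t, R r s -> R s t -> R r t) ->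
  (forall A : T -> Prop, (forall s t, A s -> A t -> R s t \/ R t s) ->
      exists t, forall s, A s -> R s t) ->
  exists t, forall s, R t s -> R s t.
Proof.
move=> Rrefl Rtrans Rchain.
have [t Ht] : exists t, premaximal (fun a b => `[< R a b >]) t.
  apply: (@ZL_preorder T t0).
  - move=> t; exact/asboolP.
  - move=> r s t /asboolP a /asboolP b; apply/asboolP; exact: Rtrans a b.
  - move=> A Achain; have [|t Ht] := Rchain A.
      by move=> s u As Au; case: (Achain s u As Au) => /asboolP; [left|right].
    by exists t => s As; apply/asboolP; exact: Ht.
by exists t => s Rts; apply/asboolP; apply: Ht; exact/asboolP.
Qed.
End ChoicePrinciples.

Section BanachFacts.
Context {X : CBanach}.
Notation "x +v y" := (badd X x y) (at level 50, left associativity).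
Notation nm := (bnorm X).

Definition rscal (r : R) (x : X) : X := bscal X (mkC r 0) x.

Lemma badd0l x : bzero X +v x = x.
Proof. rewrite badd_comm; apply badd_0. Qed.

Lemma badd_self_eq0 (z : X) : z = z +v z -> z = bzero X.
Proof.
  intro H. apply (f_equal (fun w => w +v bopp X z)) in H.
  rewrite badd_opp, <- badd_assoc, badd_opp, badd_0 in H. symmetry; exact H.
Qed.

Lemma bscal0 (x : X) : bscal X C0 x = bzero X.
Proof. apply badd_self_eq0. rewrite <- bscal_addc. f_equal. Cx_ring. Qed.

Lemma bnorm0 : nm (bzero X) = 0.
Proof. rewrite <- (bscal0 (bzero X)), bnorm_scal, Cabs_C0; ring. Qed.

Lemma rscal_assoc r s x : rscal r (rscal s x) = rscal (r * s) x.
Proof. unfold rscal; rewrite bscal_assoc; f_equal; Cx_ring. Qed.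

Lemma rscal_addc r s x : rscal (r + s) x = rscal r x +v rscal s x.
Proof. unfold rscal; rewrite <- bscal_addc; f_equal; Cx_ring. Qed.

Lemma rscal_addv r x y : rscal r (x +v y) = rscal r x +v rscal r y.
Proof. apply bscal_addv. Qed.

Lemma rscal1 x : rscal 1 x = x.
Proof. apply bscal_1. Qed.

Lemma rscal0 x : rscal 0 x = bzero X.
Proof. apply bscal0. Qed.

Lemma bnorm_rscal r x : nm (rscal r x) = Rabs r * nm x.
Proof. unfold rscal; rewrite bnorm_scal, Cabs_real; reflexivity. Qed.

Lemma bopp_rscal x : bopp X x = rscal (-1) x.
Proof.
  assert (E : x +v rscal (-1) x = bzero X).
  { rewrite <- (rscal1 x) at 1. rewrite <- rscal_addc.
    replace (1 + -1) with 0 by ring. apply rscal0. }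
  rewrite <- (badd_0 X (bopp X x)), <- E, badd_assoc, (badd_comm X (bopp X x)), badd_opp.
  apply badd0l.
Qed.

Lemma bnorm_opp (x : X) : nm (bopp X x) = nm x.
Proof. rewrite bopp_rscal, bnorm_rscal, Rabs_left by lra; ring. Qed.

Lemma bnorm_ge0 (x : X) : 0 <= nm x.
Proof.
  pose proof (bnorm_triangle X x (bopp X x)) as H.
  rewrite badd_opp, bnorm0, bnorm_opp in H. lra.
Qed.

Lemma bounded_by_pos (L : X -> Cx) M : bounded_by X L M ->
  exists K, 0 < K /\ bounded_by X L K.
Proof.
  intro H. exists (Rabs M + 1). split; [pose proof (Rabs_pos M); lra|].
  intro x. eapply Rle_trans; [apply H|].
  pose proof (bnorm_ge0 x); pose proof (Rle_abs M). nra.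
Qed.

Lemma dual_sub (L : X -> Cx) x y : in_dual X L -> L (bsub X x y) = Csub (L x) (L y).
Proof.
  intros (Ladd & Lscal & _). unfold bsub, rscal.
  rewrite Ladd, bopp_rscal. unfold rscal. rewrite Lscal. Cx_ring.
Qed.

End BanachFacts.

Section HahnBanach.
Variable X : CBanach.
Notation "x +v y" := (badd X x y) (at level 50, left associativity).
Notation nm := (bnorm X).

Record norming_functional (v : X) (D : X -> Prop) (g : X -> R) : Prop := {
  nf_dom0 : D (bzero X);
  nf_dom_add : forall x y, D x -> D y -> D (x +v y);
  nf_dom_scal : forall r x, D x -> D (rscal r x);
  nf_add : forall x y, D x -> D y -> g (x +v y) = g x + g y;
  nf_scal : forall r x, D x -> g (rscal r x) = r * g x;
  nf_le_norm : forall x, D x -> g x <= nm x;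
  nf_dom_v : D v;
  nf_at_v : g v = nm v }.

Definition extends (D : X -> Prop) (g : X -> R) (D' : X -> Prop) (g' : X -> R) : Prop :=
  (forall x, D x -> D' x) /\ (forall x, D x -> g' x = g x).

Lemma extends_refl D g : extends D g D g.
Proof. split; auto. Qed.

Lemma rscal_eq_coef_or_norm0 r r' v : rscal r v = rscal r' v -> r = r' \/ nm v = 0.
Proof.
  intro E. destruct (Req_dec r r') as [|ne]; [left; assumption|right].
  assert (E0 : rscal (r - r') v = bzero X).
  { unfold Rminus. rewrite rscal_addc, E, <- rscal_addc.
    replace (r' + - r') with 0 by ring. apply rscal0. }
  apply (f_equal nm) in E0. rewrite bnorm_rscal, bnorm0 in E0.
  destruct (Rmult_integral _ _ E0) as [h|h]; [|assumption].
  exfalso; apply (Rabs_no_R0 (r - r')); [lra | assumption].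
Qed.

Lemma norming_functional_on_span v : exists D g, norming_functional v D g.
Proof.
  set (D := fun x => exists r, x = rscal r v).
  set (g := fun x => match excluded_middle_informative (D x) with
                     | left h => proj1_sig (constructive_indefinite_description _ h) * nm v
                     | right _ => 0 end).
  assert (Hg : forall r, g (rscal r v) = r * nm v).
  { intro r. unfold g. destruct excluded_middle_informative as [h|h].
    - destruct (constructive_indefinite_description _ h) as [r' Hr']; simpl.
      destruct (rscal_eq_coef_or_norm0 _ _ _ Hr') as [-> | ->]; ring.
    - exfalso; apply h; exists r; reflexivity. }
  exists D, g. split.
  - exists 0; rewrite rscal0; reflexivity.
  - intros x y [r ->] [s ->]; exists (r + s); rewrite rscal_addc; reflexivity.
  - intros t x [r ->]; exists (t * r); rewrite rscal_assoc; reflexivity.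
  - intros x y [r ->] [s ->]. rewrite <- rscal_addc, !Hg; ring.
  - intros t x [r ->]. rewrite rscal_assoc, !Hg; ring.
  - intros x [r ->]. rewrite Hg, bnorm_rscal.
    pose proof (bnorm_ge0 v); pose proof (Rle_abs r). nra.
  - exists 1; rewrite rscal1; reflexivity.
  - rewrite <- (rscal1 v) at 1. rewrite Hg; ring.
Qed.

Section OneStep.
Variables (v z : X) (D : X -> Prop) (g : X -> R).
Hypothesis Hg : norming_functional v D g.
Hypothesis Dz : ~ D z.

(* The admissible values [c] for the extension at [z] form the interval
   [sup (g x - ||x - z||), inf (||z + y|| - g y)], which is nonempty since
   [g x + g y <= ||x + y|| <= ||x - z|| + ||z + y||]. *)
Lemma extension_value_exists : exists c,
  (forall x, D x -> g x - nm (bsub X x z) <= c) /\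
  (forall y, D y -> c <= nm (z +v y) - g y).
Proof.
  assert (key : forall x y, D x -> D y -> g x - nm (bsub X x z) <= nm (z +v y) - g y).
  { intros x y Dx Dy.
    pose proof (nf_le_norm _ _ _ Hg _ (nf_dom_add _ _ _ Hg _ _ Dx Dy)) as h.
    rewrite (nf_add _ _ _ Hg) in h by assumption.
    pose proof (bnorm_triangle X (bsub X x z) (z +v y)) as t.
    replace (bsub X x z +v (z +v y)) with (x +v y) in t.
    - lra.
    - unfold bsub. rewrite <- badd_assoc, (badd_assoc X (bopp X z)),
        (badd_comm X (bopp X z) z), badd_opp, badd0l. reflexivity. }
  set (S := fun a => exists x, D x /\ a = g x - nm (bsub X x z)).
  assert (Sb : bound S).
  { exists (nm (z +v bzero X) - g (bzero X)). intros a [x [Dx ->]].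
    apply key; [assumption | apply (nf_dom0 _ _ _ Hg)]. }
  assert (Sne : exists a, S a).
  { exists (g (bzero X) - nm (bsub X (bzero X) z)), (bzero X).
    split; [apply (nf_dom0 _ _ _ Hg) | reflexivity]. }
  destruct (completeness S Sb Sne) as [c [Hub Hlub]].
  exists c. split.
  - intros x Dx; apply Hub; exists x; split; auto.
  - intros y Dy; apply Hlub. intros a [x [Dx ->]]. apply key; assumption.
Qed.

Lemma extension_dominated c :
  (forall x, D x -> g x - nm (bsub X x z) <= c) ->
  (forall y, D y -> c <= nm (z +v y) - g y) ->
  forall x r, D x -> g x + r * c <= nm (x +v rscal r z).
Proof.
  intros c_lo c_hi x r Dx.
  destruct (Rtotal_order r 0) as [rn|[r0|rp]].
  - pose proof (c_lo _ (nf_dom_scal _ _ _ Hg (/ - r) _ Dx)) as h.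
    rewrite (nf_scal _ _ _ Hg) in h by assumption.
    assert (E : x +v rscal r z = rscal (- r) (bsub X (rscal (/ - r) x) z)).
    { unfold bsub. rewrite rscal_addv, rscal_assoc, bopp_rscal, rscal_assoc.
      replace (- r * / - r) with 1 by (field; lra). rewrite rscal1.
      do 2 f_equal; ring. }
    rewrite E, bnorm_rscal, Rabs_right by lra.
    apply (Rmult_le_compat_l (- r)) in h; [|lra].
    replace (- r * (/ - r * g x - nm (bsub X (rscal (/ - r) x) z)))
      with (g x + r * nm (bsub X (rscal (/ - r) x) z)) in h by (field; lra).
    lra.
  - subst r. rewrite rscal0, badd_0, Rmult_0_l, Rplus_0_r.
    apply (nf_le_norm _ _ _ Hg); assumption.
  - pose proof (c_hi _ (nf_dom_scal _ _ _ Hg (/ r) _ Dx)) as h.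
    rewrite (nf_scal _ _ _ Hg) in h by assumption.
    assert (E : x +v rscal r z = rscal r (z +v rscal (/ r) x)).
    { rewrite rscal_addv, rscal_assoc. replace (r * / r) with 1 by (field; lra).
      rewrite rscal1. apply badd_comm. }
    rewrite E, bnorm_rscal, Rabs_right by lra.
    apply (Rmult_le_compat_l r) in h; [|lra].
    replace (r * (nm (z +v rscal (/ r) x) - / r * g x))
      with (r * nm (z +v rscal (/ r) x) - g x) in h by (field; lra).
    lra.
Qed.

Lemma decomposition_unique x r x' r' : D x -> D x' ->
  x +v rscal r z = x' +v rscal r' z -> r = r' /\ x = x'.
Proof.
  intros Dx Dx' E.
  assert (Ex : x = x' +v rscal (r' - r) z).
  { apply (f_equal (fun w => w +v rscal (- r) z)) in E.
    rewrite <- !badd_assoc, <- !rscal_addc in E.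
    replace (r + - r) with 0 in E by ring. rewrite rscal0, badd_0 in E.
    exact E. }
  destruct (Req_dec r r') as [<-|ne].
  - split; [reflexivity|]. rewrite Ex. replace (r - r) with 0 by ring.
    rewrite rscal0, badd_0; reflexivity.
  - exfalso; apply Dz.
    replace z with (rscal (/ (r' - r)) (x +v rscal (-1) x')).
    + apply (nf_dom_scal _ _ _ Hg), (nf_dom_add _ _ _ Hg); [assumption|].
      apply (nf_dom_scal _ _ _ Hg); assumption.
    + rewrite Ex, (badd_comm X x'), <- badd_assoc, <- bopp_rscal, badd_opp, badd_0.
      rewrite rscal_assoc. replace (/ (r' - r) * (r' - r)) with 1 by (field; lra).
      apply rscal1.
Qed.

Lemma norming_functional_extend : exists D' g',
  norming_functional v D' g' /\ extends D g D' g' /\ D' z.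
Proof.
  destruct extension_value_exists as [c [c_lo c_hi]].
  set (D' := fun w => exists x r, D x /\ w = x +v rscal r z).
  set (g' := fun w => match excluded_middle_informative
                         (exists p : X * R, D (fst p) /\ w = fst p +v rscal (snd p) z) with
                     | left h => let p := proj1_sig (constructive_indefinite_description _ h) in
                                 g (fst p) + snd p * c
                     | right _ => 0 end).
  assert (Hg' : forall x r, D x -> g' (x +v rscal r z) = g x + r * c).
  { intros x r Dx. unfold g'. destruct excluded_middle_informative as [h|h].
    - destruct (constructive_indefinite_description _ h) as [[x1 r1] [Dx1 E]]; simpl in *.
      destruct (decomposition_unique _ _ _ _ Dx Dx1 E) as [-> ->]. reflexivity.
    - exfalso; apply h; exists (x, r); auto. }
  assert (Din : forall x, x = x +v rscal 0 z) by (intro; rewrite rscal0, badd_0; reflexivity).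
  assert (swap : forall a b c d, (a +v b) +v (c +v d) = (a +v c) +v (b +v d)).
  { intros. rewrite <- !badd_assoc. f_equal. rewrite !badd_assoc. f_equal. apply badd_comm. }
  destruct Hg as [D0 Dadd Dscal gadd gscal gle Dv gv].
  exists D', g'. split; [split|split; [split|]].
  - exists (bzero X), 0; auto.
  - intros w1 w2 [x [r [Dx ->]]] [y [s [Dy ->]]]. exists (x +v y), (r + s).
    rewrite rscal_addc; auto.
  - intros t w [x [r [Dx ->]]]. exists (rscal t x), (t * r).
    rewrite rscal_addv, rscal_assoc; auto.
  - intros w1 w2 [x [r [Dx ->]]] [y [s [Dy ->]]].
    rewrite swap, <- rscal_addc, !Hg', gadd by auto. ring.
  - intros t w [x [r [Dx ->]]]. rewrite rscal_addv, rscal_assoc, !Hg', gscal by auto. ring.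
  - intros w [x [r [Dx ->]]]. rewrite Hg' by assumption.
    apply extension_dominated; assumption.
  - exists v, 0; auto.
  - rewrite (Din v) at 1. rewrite Hg', gv by assumption; ring.
  - intros x Dx. exists x, 0; auto.
  - intros x Dx. rewrite (Din x) at 1. rewrite Hg' by assumption; ring.
  - exists (bzero X), 1. rewrite rscal1, badd0l; auto.
Qed.

End OneStep.

Definition norming_pair (v : X) :=
  { p : (X -> Prop) * (X -> R) | norming_functional v (fst p) (snd p) }.

Definition pair_extends {v} (a b : norming_pair v) : Prop :=
  extends (fst (proj1_sig a)) (snd (proj1_sig a)) (fst (proj1_sig b)) (snd (proj1_sig b)).

Lemma norming_chain_bound v (t0 : norming_pair v) (A : norming_pair v -> Prop) :
  (forall s t, A s -> A t -> pair_extends s t \/ pair_extends t s) ->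
  exists t, forall s, A s -> pair_extends s t.
Proof.
  intro Achain.
  destruct (classic (exists s0, A s0)) as [[s0 As0]|Aempty]; last first.
  { exists t0. intros s As; exfalso; apply Aempty; eauto. }
  set (dom := fun (t : norming_pair v) => fst (proj1_sig t)).
  set (fn := fun (t : norming_pair v) => snd (proj1_sig t)).
  assert (upper : forall t1 t2, A t1 -> A t2 ->
    exists t, A t /\ pair_extends t1 t /\ pair_extends t2 t).
  { intros t1 t2 A1 A2. destruct (Achain t1 t2 A1 A2) as [e|e];
      [exists t2 | exists t1]; (split; [assumption | split]);
      solve [assumption | apply extends_refl]. }
  set (Du := fun x => exists t, A t /\ dom t x).
  set (gu := fun x => match excluded_middle_informative (Du x) with
                      | left h => fn (proj1_sig (constructive_indefinite_description _ h)) x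
                      | right _ => 0 end).
  assert (Hgu : forall t x, A t -> dom t x -> gu x = fn t x).
  { intros t x At Dt. unfold gu. destruct excluded_middle_informative as [h|h].
    - destruct (constructive_indefinite_description _ h) as [t' [At' Dt']]; simpl.
      destruct (Achain t t' At At') as [[_ e]|[_ e]]; [ | symmetry]; apply e; assumption.
    - exfalso; apply h; exists t; split; assumption. }
  assert (Hu : norming_functional v Du gu).
  { split.
    - exists s0; split; [assumption | apply (nf_dom0 _ _ _ (proj2_sig s0))].
    - intros x y [t1 [A1 D1]] [t2 [A2 D2]].
      destruct (upper t1 t2 A1 A2) as [t [At [[i1 _] [i2 _]]]].
      exists t; split; [assumption|].
      apply (nf_dom_add _ _ _ (proj2_sig t)); [apply i1 | apply i2]; assumption.
    - intros r x [t [At Dx]]. exists t; split; [assumption|].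
      apply (nf_dom_scal _ _ _ (proj2_sig t)); assumption.
    - intros x y [t1 [A1 D1]] [t2 [A2 D2]].
      destruct (upper t1 t2 A1 A2) as [t [At [[i1 _] [i2 _]]]].
      pose proof (proj2_sig t) as Ht.
      assert (Dx : dom t x) by (apply i1; assumption).
      assert (Dy : dom t y) by (apply i2; assumption).
      rewrite (Hgu t _ At (nf_dom_add _ _ _ Ht _ _ Dx Dy)), (Hgu t x At Dx), (Hgu t y At Dy).
      apply (nf_add _ _ _ Ht); assumption.
    - intros r x [t [At Dx]].
      rewrite (Hgu t _ At (nf_dom_scal _ _ _ (proj2_sig t) r x Dx)), (Hgu t x At Dx).
      apply (nf_scal _ _ _ (proj2_sig t)); assumption.
    - intros x [t [At Dx]]. rewrite (Hgu t x At Dx).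
      apply (nf_le_norm _ _ _ (proj2_sig t)); assumption.
    - exists s0; split; [assumption | apply (nf_dom_v _ _ _ (proj2_sig s0))].
    - rewrite (Hgu s0 v As0 (nf_dom_v _ _ _ (proj2_sig s0))).
      apply (nf_at_v _ _ _ (proj2_sig s0)). }
  exists (exist _ (Du, gu) Hu). intros s As. split.
  - intros x Dx. exists s; split; assumption.
  - intros x Dx. apply (Hgu s); assumption.
Qed.

Lemma real_hahn_banach v : exists g : X -> R,
  (forall x y, g (x +v y) = g x + g y) /\ (forall r x, g (rscal r x) = r * g x) /\
  (forall x, g x <= nm x) /\ g v = nm v.
Proof.
  destruct (norming_functional_on_span v) as [D0 [g0 H0]].
  set (t0 := exist (fun p => norming_functional v (fst p) (snd p)) (D0, g0) H0).
  destruct (ChoicePrinciples.zorn_preorder (norming_pair v) t0 pair_extends) as [t Tmax].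
  - intro t; apply extends_refl.
  - intros a b c [i1 e1] [i2 e2]; split; auto. intros x Dx. rewrite e2 by auto. auto.
  - exact (norming_chain_bound v t0).
  - pose proof (proj2_sig t) as Hg; simpl in Hg.
    assert (Dfull : forall z, fst (proj1_sig t) z).
    { intro z. apply NNPP; intro Dz.
      destruct (norming_functional_extend v z _ _ Hg Dz) as [D' [g' [Hg' [ext Dz']]]].
      destruct (Tmax (exist _ (D', g') Hg') ext) as [incl _]. exact (Dz (incl z Dz')). }
    destruct Hg as [_ _ _ gadd gscal gle _ gv].
    exists (snd (proj1_sig t)). repeat split; intros; auto.
Qed.

Lemma complex_hahn_banach v : exists L, in_dual X L /\ bounded_by X L 2 /\ nm v <= Cabs (L v).
Proof.
  destruct (real_hahn_banach v) as [g [gadd [gscal [gle gv]]]].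
  assert (gabs : forall x, Rabs (g x) <= nm x).
  { intro x. apply Rabs_le. split; [|apply gle].
    pose proof (gle (rscal (-1) x)) as h. rewrite gscal, bnorm_rscal, Rabs_left in h by lra.
    lra. }
  set (ci := mkC 0 1).
  assert (nm_ci : forall x, nm (bscal X ci x) = nm x).
  { intro x. rewrite bnorm_scal. unfold Cabs, ci; simpl.
    replace (0 * 0 + 1 * 1) with 1 by ring. rewrite sqrt_1; ring. }
  (* the real part determines the complex-linear functional: re L = g, im L x = - g (i x) *)
  assert (scal_decomp : forall a x, bscal X a x = rscal (re a) x +v rscal (im a) (bscal X ci x)).
  { intros a x. unfold rscal. rewrite bscal_assoc, <- bscal_addc. f_equal. Cx_ring. }
  assert (Lbound : forall x, Cabs (mkC (g x) (- g (bscal X ci x))) <= 2 * nm x).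
  { intro x. eapply Rle_trans; [apply Cabs_le_re_im|]. simpl. rewrite Rabs_Ropp.
    pose proof (gabs x); pose proof (gabs (bscal X ci x)). rewrite nm_ci in *. lra. }
  exists (fun x => mkC (g x) (- g (bscal X ci x))). split; [split; [|split]|split].
  - intros x y. rewrite bscal_addv, !gadd. Cx_ring.
  - intros a x. rewrite bscal_assoc, (scal_decomp a x), (scal_decomp (Cmul ci a) x).
    rewrite !gadd, !gscal. unfold ci. Cx_ring.
  - exists 2; exact Lbound.
  - exact Lbound.
  - eapply Rle_trans; [|apply Cabs_re]. simpl. rewrite gv. apply Rle_abs.
Qed.

Lemma bnorm_sub_le_bidual_dist (x y : X) d :
  bidual_dist_le X (Jcan X y) (Jcan X x) d -> nm (bsub X y x) <= 2 * d.
Proof.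
  intro H. destruct (complex_hahn_banach (bsub X y x)) as [L [HL [Lb Lv]]].
  pose proof (H L 2 HL ltac:(lra) Lb) as h. unfold Jcan in h.
  rewrite <- dual_sub in h by assumption. lra.
Qed.

End HahnBanach.

Section UltrafilterLimits.
Variables (T : Type) (U : ultrafilter T).

Lemma umem_true : U (fun _ => True).
Proof.
  destruct (umem_or_compl _ U (fun _ => True)) as [h|h]; [exact h|].
  destruct (umem_nonempty _ U _ h) as [x nx]. contradiction (nx I).
Qed.

Lemma umem_const (P : Prop) : U (fun _ => P) -> P.
Proof. intro h; destruct (umem_nonempty _ U _ h); assumption. Qed.

Lemma umem_and2 (A C P : T -> Prop) : U A -> U C -> (forall x, A x -> C x -> P x) -> U P.
Proof.
  intros hA hC hP. apply (umem_mono _ U (fun x => A x /\ C x)).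
  - intros x [a c]; apply hP; assumption.
  - apply (umem_and _ U); assumption.
Qed.

Definition uconv (a : T -> Cx) (l : Cx) :=
  forall e, 0 < e -> U (fun y => Cabs (Csub (a y) l) < e).

Lemma ulimit_real_exists (a : T -> R) M : (forall y, Rabs (a y) <= M) ->
  exists l, forall e, 0 < e -> U (fun y => Rabs (a y - l) < e).
Proof.
  intro HM.
  assert (HM' : forall y, - M <= a y <= M).
  { intro y. pose proof (HM y); pose proof (Rle_abs (a y)); pose proof (Rle_abs (- a y)).
    rewrite Rabs_Ropp in *. lra. }
  (* l is the supremum of the reals t with a >= t on a U-large set *)
  set (S := fun t => U (fun y => t <= a y)).
  assert (Sne : exists t, S t).
  { exists (- M). apply (umem_mono _ U _ _ (fun y _ => proj1 (HM' y)) umem_true). }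
  assert (Sb : bound S).
  { exists M. intros t St. destruct (umem_nonempty _ U _ St) as [y hy].
    pose proof (HM' y); lra. }
  destruct (completeness S Sb Sne) as [l [Hub Hlub]].
  exists l. intros e he.
  assert (lo : U (fun y => l - e < a y)).
  { apply NNPP; intro hn. assert (l <= l - e); [|lra].
    apply Hlub. intros t St. destruct (Rle_lt_dec t (l - e)) as [h|h]; [assumption|].
    exfalso; apply hn. apply (umem_mono _ U _ _ (fun y hy => Rlt_le_trans _ _ _ h hy) St). }
  assert (hi : U (fun y => a y < l + e)).
  { destruct (umem_or_compl _ U (fun y => a y < l + e)) as [h|h]; [assumption|].
    exfalso. assert (l + e <= l); [|lra]. apply Hub.
    apply (umem_mono _ U _ _ (fun y hy => Rnot_lt_le _ _ hy) h). }
  apply (umem_and2 _ _ _ lo hi). intros y h1 h2. apply Rabs_def1; lra.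
Qed.

Lemma uconv_exists (a : T -> Cx) M : (forall y, Cabs (a y) <= M) -> exists l, uconv a l.
Proof.
  intro HM.
  destruct (ulimit_real_exists (fun y => re (a y)) M) as [l1 H1].
  { intro y; eapply Rle_trans; [apply Cabs_re | apply HM]. }
  destruct (ulimit_real_exists (fun y => im (a y)) M) as [l2 H2].
  { intro y; eapply Rle_trans; [apply Cabs_im | apply HM]. }
  exists (mkC l1 l2). intros e he.
  apply (umem_and2 _ _ _ (H1 (e/2) ltac:(lra)) (H2 (e/2) ltac:(lra))). intros y h1 h2.
  eapply Rle_lt_trans; [apply Cabs_le_re_im|].
  unfold Csub, Cadd, Copp; simpl. unfold Rminus in h1, h2. lra.
Qed.

Lemma uconv_unique a l m : uconv a l -> uconv a m -> l = m.
Proof.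
  intros Hl Hm. apply NNPP; intro ne.
  assert (hp : 0 < Cabs (Csub l m)).
  { apply Cabs_pos. intro E. apply ne, Csub_eq0, E. }
  set (e := Cabs (Csub l m) / 2).
  assert (Cabs (Csub l m) < Cabs (Csub l m)); [|lra].
  apply umem_const.
  apply (umem_and2 _ _ _ (Hl e ltac:(unfold e; lra)) (Hm e ltac:(unfold e; lra))).
  intros y h1 h2. pose proof (Cabs_sub_triangle l (a y) m).
  rewrite (Cabs_sub_sym l (a y)) in *. unfold e in *; lra.
Qed.

Lemma uconv_const c : uconv (fun _ => c) c.
Proof.
  intros e he. rewrite Csub_same, Cabs_C0.
  apply (umem_mono _ U _ _ (fun _ _ => he) umem_true).
Qed.

Lemma uconv_add a b l m : uconv a l -> uconv b m ->
  uconv (fun y => Cadd (a y) (b y)) (Cadd l m).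
Proof.
  intros Hl Hm e he.
  apply (umem_and2 _ _ _ (Hl (e/2) ltac:(lra)) (Hm (e/2) ltac:(lra))). intros y h1 h2.
  replace (Csub (Cadd (a y) (b y)) (Cadd l m)) with (Cadd (Csub (a y) l) (Csub (b y) m))
    by Cx_ring.
  eapply Rle_lt_trans; [apply Cabs_triangle | lra].
Qed.

Lemma uconv_mul a b l m M : (forall y, Cabs (a y) <= M) -> uconv a l -> uconv b m ->
  uconv (fun y => Cmul (a y) (b y)) (Cmul l m).
Proof.
  intros HM Hl Hm e he.
  assert (M0 : 0 <= M).
  { destruct (umem_nonempty _ U _ umem_true) as [y _].
    pose proof (Cabs_ge0 (a y)); pose proof (HM y); lra. }
  set (K := M + Cabs m + 1).
  assert (K0 : 0 < K) by (unfold K; pose proof (Cabs_ge0 m); lra).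
  assert (eK : 0 < e / K) by (apply Rdiv_lt_0_compat; lra).
  apply (umem_and2 _ _ _ (Hl _ eK) (Hm _ eK)). intros y h1 h2.
  replace (Csub (Cmul (a y) (b y)) (Cmul l m)) with
    (Cadd (Cmul (a y) (Csub (b y) m)) (Cmul (Csub (a y) l) m)) by Cx_ring.
  eapply Rle_lt_trans; [apply Cabs_triangle|]. rewrite !Cabs_mul.
  pose proof (HM y). pose proof (Cabs_ge0 (a y)). pose proof (Cabs_ge0 m).
  pose proof (Cabs_ge0 (Csub (b y) m)). pose proof (Cabs_ge0 (Csub (a y) l)).
  assert (Cabs (a y) * Cabs (Csub (b y) m) <= M * (e / K)) by (apply Rmult_le_compat; lra).
  assert (Cabs (Csub (a y) l) * Cabs m <= e / K * Cabs m) by (apply Rmult_le_compat_r; lra).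
  assert (E : e = e / K * K) by (field; lra).
  assert (e / K * (M + Cabs m) < e).
  { rewrite E at 2. apply Rmult_lt_compat_l; [assumption | unfold K; lra]. }
  nra.
Qed.

Definition ulim (a : T -> Cx) : Cx :=
  match excluded_middle_informative (exists l, uconv a l) with
  | left h => proj1_sig (constructive_indefinite_description _ h)
  | right _ => C0 end.

Lemma ulim_eq a l : uconv a l -> ulim a = l.
Proof.
  intro H. unfold ulim. destruct excluded_middle_informative as [h|h].
  - destruct (constructive_indefinite_description _ h) as [l' H']; simpl.
    eapply uconv_unique; eassumption.
  - exfalso; eauto.
Qed.

End UltrafilterLimits.

Section BallFunctions.
Variable X : CBanach.
Notation nm := (bnorm X).

Lemma const_in_Au c : in_Au X (fun _ => c).
Proof.
  split.
  - intro x. exists (fun _ => C0). split.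
    + split; [|split]; [intros; Cx_ring | intros; Cx_ring |].
      exists 0; intro y; rewrite Cabs_C0; lra.
    + intros e he. exists 1; split; [lra|]. intros y _.
      rewrite Csub_same. replace (Csub C0 C0) with C0 by Cx_ring.
      rewrite Cabs_C0. pose proof (bnorm_ge0 (bsub X (proj1_sig y) (proj1_sig x))). nra.
  - intros e he. exists 1; split; [lra|]. intros. rewrite Csub_same, Cabs_C0; assumption.
Qed.

Lemma holomorphic_continuous f : holomorphic X f -> forall (x : Ball X) e, 0 < e ->
  exists d, 0 < d /\ forall y : Ball X,
    nm (bsub X (proj1_sig y) (proj1_sig x)) < d -> Cabs (Csub (f y) (f x)) < e.
Proof.
  intros Hf x e he. destruct (Hf x) as [L [HL Hdiff]].
  destruct HL as (_ & _ & [M HM]). destruct (bounded_by_pos L M HM) as [K [K0 HK]].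
  destruct (Hdiff 1 ltac:(lra)) as [d1 [d1p Hd1]].
  (* |f y - f x| <= |L (y - x)| + ||y - x|| <= (K + 1) ||y - x|| near x *)
  exists (Rmin d1 (e / (K + 2))). split.
  { apply Rmin_pos; [assumption | apply Rdiv_lt_0_compat; lra]. }
  intros y hy. pose proof (Rmin_l d1 (e / (K + 2))); pose proof (Rmin_r d1 (e / (K + 2))).
  set (n := nm (bsub X (proj1_sig y) (proj1_sig x))) in *.
  assert (n0 : 0 <= n) by apply bnorm_ge0.
  assert (hd1 : n < d1) by lra. pose proof (Hd1 y hd1) as h1.
  pose proof (HK (bsub X (proj1_sig y) (proj1_sig x))) as h2.
  pose proof (Cabs_le_sub_add (Csub (f y) (f x)) (L (bsub X (proj1_sig y) (proj1_sig x)))).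
  fold n in h1, h2.
  assert (hn : (K + 2) * n < e).
  { replace e with ((K + 2) * (e / (K + 2))) by (field; lra).
    apply Rmult_lt_compat_l; lra. }
  nra.
Qed.

Lemma dual_list_bound (Ls : list (X -> Cx)) : Forall (in_dual X) Ls ->
  exists K, 0 < K /\ forall L, In L Ls -> bounded_by X L K.
Proof.
  induction 1 as [|L Ls HL HLs IH].
  - exists 1; split; [lra | intros L []].
  - destruct IH as [K1 [K1p HK1]]. destruct HL as (_ & _ & [M HM]).
    destruct (bounded_by_pos L M HM) as [K2 [K2p HK2]].
    exists (Rmax K1 K2). split; [eapply Rlt_le_trans; [apply K1p | apply Rmax_l]|].
    intros L' [<-|inL] x.
    + eapply Rle_trans; [apply HK2|].
      apply Rmult_le_compat_r; [apply bnorm_ge0 | apply Rmax_r].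
    + eapply Rle_trans; [apply HK1; assumption|].
      apply Rmult_le_compat_r; [apply bnorm_ge0 | apply Rmax_l].
Qed.

Lemma bidual_dist_lt_eval (phi psi : bidual X) L K r delta :
  in_dual X L -> 0 < K -> bounded_by X L K ->
  bidual_dist_lt X phi psi r -> r <= delta / K -> Cabs (Csub (phi L) (psi L)) < delta.
Proof.
  intros HL K0 HK [d [hd Hd]] hr.
  pose proof (Hd L K HL ltac:(lra) HK).
  assert (d * K < delta / K * K) by (apply Rmult_lt_compat_r; lra).
  replace (delta / K * K) with delta in * by (field; lra). lra.
Qed.

Lemma norm_continuous_at_x0_of_weakstar (x0 : bidual X) f0 :
  weakstar_continuous_at_x0 X x0 f0 -> forall eps, 0 < eps -> exists delta, 0 < delta /\
    forall q, bidual_dist_lt X (emb X x0 q) x0 delta -> Cabs (Csub (f0 q) (f0 None)) < eps.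
Proof.
  intros WS eps he. destruct (WS eps he) as [Ls [d [HLs [dp HW]]]].
  destruct (dual_list_bound Ls HLs) as [K [K0 HK]].
  exists (d / K). split; [apply Rdiv_lt_0_compat; lra|].
  intros q Hq. apply HW. intros L inL.
  apply (bidual_dist_lt_eval _ _ L K (d / K)); auto; [|lra].
  exact (proj1 (Forall_forall _ _) HLs L inL).
Qed.

Definition extend_at (f : Ball X -> Cx) (c : Cx) (p : option (Ball X)) : Cx :=
  match p with Some x => f x | None => c end.

Lemma norm_continuous_extend_at_ball (x0 : bidual X) f c (x : Ball X) :
  holomorphic X f -> ((forall L, in_dual X L -> x0 L = L (proj1_sig x)) -> c = f x) ->
  forall eps, 0 < eps -> exists delta, 0 < delta /\ forall q,
    bidual_dist_lt X (emb X x0 q) (emb X x0 (Some x)) delta ->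
    Cabs (Csub (extend_at f c q) (f x)) < eps.
Proof.
  intros Hf Hc eps he.
  destruct (holomorphic_continuous f Hf x eps he) as [d1 [d1p Hd1]].
  assert (Hball : forall d, d <= d1 / 2 -> forall y : Ball X,
      bidual_dist_lt X (Jcan X (proj1_sig y)) (Jcan X (proj1_sig x)) d ->
      Cabs (Csub (f y) (f x)) < eps).
  { intros d hd y [d' [hd' Hd']]. apply Hd1.
    pose proof (bnorm_sub_le_bidual_dist X (proj1_sig x) (proj1_sig y) d' Hd'). lra. }
  destruct (classic (forall L, in_dual X L -> x0 L = L (proj1_sig x))) as [Hall|Hsep].
  - exists (d1 / 2). split; [lra|]. intros [y|] Hq; simpl.
    + apply (Hball (d1 / 2)); [lra | assumption].
    + rewrite (Hc Hall), Csub_same, Cabs_C0; assumption.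
  - apply not_all_ex_not in Hsep as [L HL]. apply imply_to_and in HL as [HLd HLne].
    pose proof HLd as (_ & _ & [M HM]). destruct (bounded_by_pos L M HM) as [K [K0 HK]].
    set (gap := Cabs (Csub (x0 L) (L (proj1_sig x)))).
    assert (gp : 0 < gap) by (apply Cabs_pos; intro E; apply HLne, Csub_eq0, E).
    exists (Rmin (d1 / 2) (gap / K)). split.
    { apply Rmin_pos; [lra | apply Rdiv_lt_0_compat; lra]. }
    intros [y|] Hq; simpl in Hq |- *.
    + apply (Hball _ (Rmin_l _ _) y Hq).
    + exfalso. pose proof (bidual_dist_lt_eval _ _ L K _ gap HLd K0 HK Hq (Rmin_r _ _)).
      unfold Jcan in *. fold gap in H. lra.
Qed.

End BallFunctions.

Section Fiber.
Variables (X : CBanach) (H : (Ball X -> Cx) -> Prop) (x0 : bidual X).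
Hypothesis HH : uniform_algebra_between X H.

Lemma eval_in_fiber (x : Ball X) :
  (forall L, in_dual X L -> x0 L = L (proj1_sig x)) -> in_fiber X H x0 (fun g => g x).
Proof.
  intro Hx. destruct HH as (HAu & _).
  split; [split; [|split; [|split]]|]; try reflexivity.
  - exists (fun _ => C1). split; [apply HAu, const_in_Au|].
    intro E; apply (f_equal re) in E; simpl in E; lra.
  - intros L HL; symmetry; apply Hx; assumption.
Qed.

Lemma ulim_in_fiber (U : ultrafilter (Ball X)) :
  (forall L e, in_dual X L -> 0 < e -> U (fun y => Cabs (Csub (L (proj1_sig y)) (x0 L)) < e)) ->
  in_fiber X H x0 (ulim _ U) /\ forall g, H g -> uconv _ U g (ulim _ U g).
Proof.
  intro Uconv. destruct HH as (HAu & HHinf & _).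
  assert (conv : forall g, H g -> uconv _ U g (ulim _ U g)).
  { intros g Hg. destruct (HHinf g Hg) as [_ [M HM]].
    destruct (uconv_exists _ U g M HM) as [l Hl].
    rewrite (ulim_eq _ U g l Hl). exact Hl. }
  split; [|exact conv].
  split; [split; [|split; [|split]]|].
  - intros g h Hg Hh. apply ulim_eq, uconv_add; auto.
  - intros a g Hg. apply ulim_eq.
    replace (fun y => Cmul a (g y)) with (fun y => Cmul ((fun _ => a) y) (g y)) by reflexivity.
    apply (uconv_mul _ _ _ _ _ _ (Cabs a)); [intro; apply Rle_refl | apply uconv_const | auto].
  - intros g h Hg Hh. destruct (HHinf g Hg) as [_ [M HM]].
    apply ulim_eq, (uconv_mul _ _ _ _ _ _ M); auto.
  - exists (fun _ => C1). split; [apply HAu, const_in_Au|].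
    rewrite (ulim_eq _ U _ C1 (uconv_const _ U C1)).
    intro E; apply (f_equal re) in E; simpl in E; lra.
  - intros L HL. apply ulim_eq. intros e he. apply Uconv; assumption.
Qed.

Lemma weakstar_continuous_extend f c : H f ->
  (forall tau, in_fiber X H x0 tau -> tau f = c) ->
  weakstar_continuous_at_x0 X x0 (extend_at X f c).
Proof.
  intros Hf Hc eps he. apply NNPP; intro Hnot.
  set (adm := fun p : list (X -> Cx) * R => Forall (in_dual X) (fst p) /\ 0 < snd p).
  set (I := sig adm).
  set (base := fun (i : I) (y : Ball X) =>
    (forall L, In L (fst (proj1_sig i)) ->
       Cabs (Csub (L (proj1_sig y)) (x0 L)) < snd (proj1_sig i)) /\
    eps <= Cabs (Csub (f y) c)).
  assert (i1 : adm (nil, 1)).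
  { split; [constructor | simpl; lra]. }
  destruct (ChoicePrinciples.ultrafilter_of_basis I (Ball X) base) as [U Ubase].
  - exists (exist adm _ i1); trivial.
  - intros [[L1 d1] [h1 h1']] [[L2 d2] [h2 h2']]; simpl in *.
    assert (i12 : adm (L1 ++ L2, Rmin d1 d2)).
    { split; [apply Forall_app; auto | apply Rmin_pos; auto]. }
    exists (exist adm _ i12). intros y [hy1 hy2]; simpl in *.
    split; split; auto; intros L inL; eapply Rlt_le_trans;
      try (apply hy1; apply in_or_app; auto); [apply Rmin_l | apply Rmin_r].
  - intros [[Ls d] [hLs hd]]. apply NNPP; intro Hempty. apply Hnot.
    exists Ls, d. split; [assumption | split; [assumption|]].
    intros [y|] Hy; simpl.
    + apply Rnot_le_lt; intro hle. apply Hempty; exists y; split; assumption.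
    + rewrite Csub_same, Cabs_C0; assumption.
  - assert (Uconv : forall L e, in_dual X L -> 0 < e ->
              U (fun y => Cabs (Csub (L (proj1_sig y)) (x0 L)) < e)).
    { intros L e HL hpos.
      assert (iL : adm (L :: nil, e)).
      { split; [constructor; auto | assumption]. }
      apply (umem_mono _ U _ _ (fun y hy => proj1 hy L (or_introl eq_refl))
               (Ubase (exist adm _ iL))). }
    destruct (ulim_in_fiber U Uconv) as [Hfib conv].
    pose proof (conv f Hf) as convf. rewrite (Hc _ Hfib) in convf.
    destruct (umem_nonempty _ U _ (umem_and _ U _ _ (Ubase (exist adm _ i1)) (convf eps he)))
      as [y [[_ hy1] hy2]].
    lra.
Qed.

Lemma norm_continuous_extend f c :
  holomorphic X f -> weakstar_continuous_at_x0 X x0 (extend_at X f c) ->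
  (forall x : Ball X, (forall L, in_dual X L -> x0 L = L (proj1_sig x)) -> c = f x) ->
  norm_continuous_on X x0 (extend_at X f c).
Proof.
  intros Hf WS Hc [x|] eps he.
  - exact (norm_continuous_extend_at_ball X x0 f c x Hf (Hc x) eps he).
  - exact (norm_continuous_at_x0_of_weakstar X x0 _ WS eps he).
Qed.

End Fiber.

Lemma value_of_constant_on {A B : Type} (b0 : B) (P : A -> Prop) (F : A -> B) :
  (forall a1 a2, P a1 -> P a2 -> F a1 = F a2) -> exists b, forall a, P a -> F a = b.
Proof.
  intro Fconst. destruct (classic (exists a, P a)) as [[a Pa]|none].
  - exists (F a). intros a' Pa'. apply Fconst; assumption.
  - exists b0. intros a Pa. exfalso; apply none; exists a; assumption.
Qed.

Theorem mainTheorem3 (X : CBanach) (H : (Ball X -> Cx) -> Prop)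
  (HH : uniform_algebra_between X H)
  (x0 : bidual X) (Hx0 : in_bidual_ball X x0)
  (f : Ball X -> Cx) (Hf : H f)
  (Hconst : forall tau1 tau2, in_fiber X H x0 tau1 -> in_fiber X H x0 tau2 ->
              tau1 f = tau2 f) :
  exists f0 : option (Ball X) -> Cx,
    (forall x : Ball X, f0 (Some x) = f x) /\
    norm_continuous_on X x0 f0 /\
    weakstar_continuous_at_x0 X x0 f0.
Proof.
  destruct (value_of_constant_on C0 (in_fiber X H x0) (fun tau => tau f) Hconst) as [c Hc].
  pose proof (weakstar_continuous_extend X H x0 HH f c Hf Hc) as WS.
  exists (extend_at X f c). split; [reflexivity | split; [|exact WS]].
  apply norm_continuous_extend; [|exact WS|].
  - destruct HH as (_ & HHinf & _). exact (proj1 (HHinf f Hf)).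
  - intros x Hx. symmetry. exact (Hc _ (eval_in_fiber X H x0 HH x Hx)).
Qed.
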